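(* Let $q\ge 7$ and $s\in[1,7]$ be integers, $C$ a finite set with $|C|=2q+s$, and $M\in\mathcal M(6,q,C)$. If $\{i,k\}\subseteq\{1,\dots,6\}$ with $i\ne k$ and $r(i,k)\ge 1$, then $r(i,k)+r_{3+}(i,k)\le 8-s$.
   Context: $\mathcal M(6,q,C)$ is the set of $6\times q$ matrices $M$ with entries from $C$ such that each row has $q$ pairwise distinct entries, each column has $6$ pairwise distinct entries, and every pair of distinct colours of $C$ appears together in some row or some column of $M$. The frequency of a colour is the number of entries of $M$ equal to it. For rows $i\ne k$, $r(i,k)$ is the number of colours of frequency exactly $2$ appearing in both row $i$ and row $k$, and $r_{3+}(i,k)$ is the number of colours of frequency at least $3$ appearing in both row $i$ and row $k$. *)

From mathcomp Require Import all_boot all_order all_algebra.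
Set Implicit Arguments. Unset Strict Implicit. Unset Printing Implicit Defensive.

Section Defs.
Variables (C : finType) (q : nat).

Definition in_M (M : 'M[C]_(6, q)) : Prop :=
  (forall i : 'I_6, injective (fun j : 'I_q => M i j)) /\
  (forall j : 'I_q, injective (fun i : 'I_6 => M i j)) /\
  (forall c d : C, c != d ->
     (exists i : 'I_6, exists j1 j2 : 'I_q, M i j1 = c /\ M i j2 = d) \/
     (exists j : 'I_q, exists i1 i2 : 'I_6, M i1 j = c /\ M i2 j = d)).

Definition freq (M : 'M[C]_(6, q)) (c : C) : nat :=
  #|[set ij : 'I_6 * 'I_q | M ij.1 ij.2 == c]|.

Definition in_row (M : 'M[C]_(6, q)) (i : 'I_6) (c : C) : bool :=
  [exists j : 'I_q, M i j == c].

Definition r (M : 'M[C]_(6, q)) (i k : 'I_6) : nat :=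
  #|[set c : C | (freq M c == 2) && in_row M i c && in_row M k c]|.

Definition r3 (M : 'M[C]_(6, q)) (i k : 'I_6) : nat :=
  #|[set c : C | (3 <= freq M c) && in_row M i c && in_row M k c]|.
End Defs.

From mathcomp Require Import all_boot all_order all_algebra.
From mathcomp Require Import zify.

(* Let c be a colour of frequency 2 shared by rows i and k, at columns j1 and j2.
   Every other colour meets c in some line, and the only lines through c are
   rows i, k and columns j1, j2; so every colour occurs in the cross formed by
   these lines, which has at most 2q + 8 cells.  A colour common to rows i and
   k occupies two cells of the cross, so |C| + #common colours <= 2q + 8, i.e.
   there are at most 8 - s common colours, and r + r3 counts some of them. *)

Definition cross {T1 T2 : finType} (R : {set T1}) (Q : {set T2}) :
    {set T1 * T2} :=
  [set p | (p.1 \in R) || (p.2 \in Q)].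

Lemma card_cross_le {T1 T2 : finType} (R : {set T1}) (Q : {set T2}) :
  #|cross R Q| <= #|R| * #|T2| + #|~: R| * #|Q|.
Proof.
have -> : cross R Q = setX R [set: T2] :|: setX (~: R) Q.
  by apply/setP => -[x y]; rewrite !inE; case: (x \in R).
by rewrite -[#|T2|]cardsT -!cardsX leq_card_setU.
Qed.

Lemma card_imset_add_le {aT rT : finType} (f : aT -> rT) (A : {set aT})
    {X : {set rT}} :
  {in X, forall y, 1 < #|[set x in A | f x == y]|} ->
  #|f @: A| + #|X| <= #|A|.
Proof.
move=> fiberX.
have sXfA : X \subset f @: A.
  apply/subsetP => y /fiberX /ltnW /card_gt0P[x].
  by rewrite inE => /andP[Ax /eqP <-]; apply: imset_f.
have -> : #|X| = \sum_(y in f @: A) (y \in X).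
  rewrite -big_mkcondr sum1dep_card -{1}(setIidPr sXfA).
  by apply: eq_card => y; rewrite !inE.
rewrite -sum1_card -big_split -[#|A|]sum1_card (partition_big_imset f) /=.
apply: leq_sum => y /imsetP[x0 Ax0 ->]; rewrite sum1dep_card.
case: (boolP (f x0 \in X)) => [/fiberX //| _].
by apply/card_gt0P; exists x0; rewrite inE Ax0 /=.
Qed.

Definition entry {C : Type} {m n : nat} (M : 'M[C]_(m, n)) (p : 'I_m * 'I_n)
    : C :=
  M p.1 p.2.

Section Matrix.
Context {C : finType} {q : nat} (M : 'M[C]_(6, q)).

Definition common_colours (i k : 'I_6) : {set C} :=
  [set d | in_row M i d && in_row M k d].

Lemma r_add_r3_le (i k : 'I_6) : r M i k + r3 M i k <= #|common_colours i k|.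
Proof.
rewrite /r /r3 -cardsUI.
set A := [set d | _]; set B := [set d | _].
have -> : A :&: B = set0.
  by apply/setP => d; rewrite !inE; case: eqP => // ->; rewrite /= andbF.
rewrite cards0 addn0; apply: subset_leq_card; apply/subsetP => d.
by rewrite !inE => /orP[] /andP[/andP[_ ->] ->].
Qed.

Lemma common_colour_fiber (Q : {set 'I_q}) {R : {set 'I_6}} {i k : 'I_6} :
  i \in R -> k \in R -> i != k ->
  {in common_colours i k,
    forall d, 1 < #|[set p in cross R Q | entry M p == d]|}.
Proof.
move=> iR kR ik d.
rewrite inE => /andP[/existsP[ji /eqP di] /existsP[jk /eqP dk]].
apply/card_gt1P; exists (i, ji), (k, jk).
by rewrite !inE /entry /= iR kR di dk eqxx xpair_eqE negb_and ik.
Qed.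

Lemma cells_of_freq2 {c : C} {i k : 'I_6} {j1 j2 : 'I_q} :
  freq M c = 2 -> M i j1 = c -> M k j2 = c -> i != k ->
  forall x y, M x y = c -> x \in [set i; k] /\ y \in [set j1; j2].
Proof.
move=> fc ci ck ik x y cxy.
have : [set p | M p.1 p.2 == c] = [set (i, j1); (k, j2)].
  apply/esym/eqP; rewrite eqEcard cards2 xpair_eqE negb_and ik -/(freq M c) fc.
  by rewrite andbT; apply/subsetP => p; rewrite !inE => /orP[] /eqP -> /=;
     rewrite ?ci ?ck.
move/setP/(_ (x, y)); rewrite !inE cxy eqxx xpair_eqE.
by move=> /esym/orP[] /andP[-> ->]; rewrite ?orbT.
Qed.

Lemma colours_in_cross {c : C} {x0 : 'I_6} {y0 : 'I_q} {R : {set 'I_6}}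
    {Q : {set 'I_q}} :
  in_M M -> M x0 y0 = c ->
  (forall x y, M x y = c -> x \in R /\ y \in Q) ->
  entry M @: cross R Q = setT.
Proof.
move=> [_ [_ meet]] cxy0 cRQ; apply/setP => d; rewrite inE; apply/imsetP.
case: (eqVneq c d) => [<- | cd].
  by exists (x0, y0) => //; have [x0R _] := cRQ _ _ cxy0; rewrite inE x0R.
case: (meet c d cd) => [[x [y1 [y2 [cxy dxy]]]] | [y [x1 [x2 [cxy dxy]]]]].
  by exists (x, y2) => //; have [xR _] := cRQ _ _ cxy; rewrite inE xR.
by exists (x2, y) => //; have [_ yQ] := cRQ _ _ cxy; rewrite inE yQ orbT.
Qed.

End Matrix.

Theorem claim2 (q s : nat) (C : finType) (M : 'M[C]_(6, q)) (i k : 'I_6) :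
  7 <= q -> 1 <= s <= 7 -> #|C| = 2 * q + s -> in_M M ->
  i != k -> 1 <= r M i k ->
  r M i k + r3 M i k <= 8 - s.
Proof.
move=> _ _ cardC MinM ik /card_gt0P[c].
rewrite inE => /andP[/andP[fc /existsP[j1 /eqP ci]] /existsP[j2 /eqP ck]].
set R := [set i; k]; set Q := [set j1; j2].
have cRQ := cells_of_freq2 M (eqP fc) ci ck ik.
have cover := card_imset_add_le (entry M) (cross R Q)
  (common_colour_fiber M Q (set21 i k) (set22 i k) ik).
rewrite (colours_in_cross M MinM ci cRQ) cardsT cardC in cover.
have cardR : #|R| = 2 by rewrite cards2 ik.
have cardCR : #|~: R| = 4.
  by apply/eqP; rewrite -(eqn_add2l 2) -{1}cardR cardsC card_ord.
have cardQ : #|Q| <= 2 by rewrite cards2; case: (j1 != j2).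
have small_cross : #|cross R Q| <= 2 * q + 8.
  by apply: leq_trans (card_cross_le R Q) _; rewrite cardR cardCR card_ord; lia.
have := leq_trans cover small_cross; have := r_add_r3_le M i k.
lia.
Qed.
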